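(* Let $d\ge1$, $n\ge3$, $u\in\mathbb{C}\setminus\{0\}$. In $\mathrm{Y}_{d,n}(u)$: (1) $g_1c_{1,2}=[1+(u-1)e_1]c_{1,2}$; (2) $g_2c_{1,2}=[1+(u-1)e_2]c_{1,2}$; (3) $g_1g_2c_{1,2}=[1+(u-1)e_1+(u-1)e_{1,3}+(u-1)^2e_1e_2]c_{1,2}$; (4) $g_2g_1c_{1,2}=[1+(u-1)e_2+(u-1)e_{1,3}+(u-1)^2e_1e_2]c_{1,2}$; (5) $g_1g_2g_1c_{1,2}=[1+(u-1)(e_1+e_2+e_{1,3})+(u-1)^2(u+2)e_1e_2]c_{1,2}$.
   Context: The Yokonuma–Hecke algebra $\mathrm{Y}_{d,n}(u)$ is the unital associative $\mathbb{C}$-algebra with generators $g_1,\ldots,g_{n-1},t_1,\ldots,t_n$ and relations: $g_ig_j=g_jg_i$ for $|i-j|>1$; $g_{i+1}g_ig_{i+1}=g_ig_{i+1}g_i$; $t_it_j=t_jt_i$; $t_i^d=1$; $g_it_i=t_{i+1}g_i$; $g_it_{i+1}=t_ig_i$; $g_it_j=t_jg_i$ for $j\ne i,i+1$; $g_i^2=1+(u-1)e_i+(u-1)e_ig_i$, where $e_i=\frac1d\sum_{s=0}^{d-1}t_i^st_{i+1}^{d-s}$. Also $e_{i,j}=\frac1d\sum_{s=0}^{d-1}t_i^st_j^{d-s}$. For $w\in S_n$ with reduced expression $s_{i_1}\cdots s_{i_k}$ put $g_w=g_{i_1}\cdots g_{i_k}$; $g_{1,2}=\sum_{w\in S_3}g_w$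 and $c_{1,2}=\sum_{a,b,c=0}^{d-1}t_1^at_2^bt_3^c\,g_{1,2}$. *)

From HB Require Import structures.
From mathcomp Require Import all_boot all_order all_algebra.
From mathcomp Require Import reals.
From mathcomp Require Import complex.
Set Implicit Arguments. Unset Strict Implicit. Unset Printing Implicit Defensive.
Import Order.TTheory GRing.Theory Num.Theory.
Local Open Scope ring_scope.
Local Open Scope nat_scope.
Local Open Scope ring_scope.

Definition CC (R : realType) : numClosedFieldType := R[i].

Section YH.
Variables (K : fieldType) (A : algType K).

Definition eij (d : nat) (t : nat -> A) (i j : nat) : A :=
  (d%:R : K)^-1 *: \sum_(s < d) (t i ^+ s * t j ^+ (d - s)).

Definition YH_relations (d n : nat) (u : K) (g t : nat -> A) : Prop :=
  (forall i j, (1 <= i <= n.-1)%N -> (1 <= j <= n.-1)%N ->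
         (i + 1 < j \/ j + 1 < i)%N -> g i * g j = g j * g i) /\
      (forall i, (1 <= i)%N -> (i.+1 <= n.-1)%N ->
         g i.+1 * g i * g i.+1 = g i * g i.+1 * g i) /\
      (forall i j, (1 <= i <= n)%N -> (1 <= j <= n)%N -> t i * t j = t j * t i) /\
      (forall i, (1 <= i <= n)%N -> t i ^+ d = 1) /\
      (forall i, (1 <= i <= n.-1)%N -> g i * t i = t i.+1 * g i) /\
      (forall i, (1 <= i <= n.-1)%N -> g i * t i.+1 = t i * g i) /\
      (forall i j, (1 <= i <= n.-1)%N -> (1 <= j <= n)%N -> (j != i)%N -> (j != i.+1)%N ->
         g i * t j = t j * g i) /\
      (forall i, (1 <= i <= n.-1)%N ->
         g i ^+ 2 = 1 + (u - 1) *: eij d t i i.+1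
                      + (u - 1) *: (eij d t i i.+1 * g i)).

(* g_{1,2} = sum_{w in S_3} g_w, using reduced words 1, s1, s2, s1s2, s2s1, s1s2s1 *)
Definition g12 (g : nat -> A) : A :=
  1 + g 1%N + g 2%N + g 1%N * g 2%N + g 2%N * g 1%N + g 1%N * g 2%N * g 1%N.

Definition c12 (d : nat) (g t : nat -> A) : A :=
  \sum_(a < d) \sum_(b < d) \sum_(c < d)
     (t 1%N ^+ a * t 2%N ^+ b * t 3%N ^+ c * g12 g).
End YH.

(* The element c_{1,2} factors as T g_{1,2}, where T = (sum t_1^a)(sum t_2^b)(sum t_3^c)
   commutes with g_1, g_2 and every e_{i,j}, and where, by the braid relation,
   g_{1,2} = (1 + g_1)(1 + g_2 + g_2 g_1) = (1 + g_2)(1 + g_1 + g_1 g_2).  The quadratic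
   relation reads g_i (1 + g_i) = (1 + (u-1) e_i)(1 + g_i), which gives (1) and (2).
   For (3)-(5), pushing g_1 or g_2 through a factor 1 + (u-1) e_{i,j} only permutes the
   indices of e_{i,j}; and since e_{i,j} is the idempotent average over the cyclic group
   generated by t_i t_j^-1, any product of two distinct e's among e_1, e_2, e_{1,3}
   collapses to e_1 e_2. *)

From HB Require Import structures.
From mathcomp Require Import all_boot all_order all_algebra.
From mathcomp Require Import reals complex.
From mathcomp Require Import zify ring.
Import GRing.Theory Num.Theory.
Local Open Scope ring_scope.
Set Implicit Arguments. Unset Strict Implicit. Unset Printing Implicit Defensive.

Section PowerMeans.
Variables (K : fieldType) (A : algType K) (d : nat).
Implicit Types (g w x y : A) (k : K).

Definition powsum w : A := \sum_(s < d) w ^+ s.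

Definition powmean w : A := (d%:R : K)^-1 *: powsum w.

Lemma commr_scale x y k : GRing.comm x y -> GRing.comm x (k *: y).
Proof. by move=> xy; rewrite /GRing.comm -scalerAl -scalerAr xy. Qed.

Lemma commr_powsum x w : GRing.comm x w -> GRing.comm x (powsum w).
Proof. by move=> xw; apply: commr_sum => s _; apply: commrX. Qed.

Lemma commr_powmean x w : GRing.comm x w -> GRing.comm x (powmean w).
Proof. by move=> xw; apply/commr_scale/commr_powsum. Qed.

Lemma powmeanC x y : GRing.comm x y -> powmean x * powmean y = powmean y * powmean x.
Proof. by move=> xy; apply/commr_powmean/commr_sym/commr_powmean/commr_sym. Qed.

Lemma powsum_mulr w : w ^+ d = 1 -> powsum w * w = powsum w.
Proof.
rewrite /powsum mulr_suml; case: d => [|m] wd; first by rewrite !big_ord0.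
under eq_bigr do rewrite -exprSr.
by rewrite big_ord_recr big_ord_recl /= wd expr0 addrC.
Qed.

Lemma powmean_mulrX w n : w ^+ d = 1 -> powmean w * w ^+ n = powmean w.
Proof.
move=> wd; elim: n => [|n IHn]; first by rewrite mulr1.
by rewrite exprSr mulrA IHn -scalerAl powsum_mulr.
Qed.

Lemma powmean_idem w : (d%:R : K) != 0 -> w ^+ d = 1 -> powmean w * powmean w = powmean w.
Proof.
move=> dK wd; rewrite {2}/powmean /powsum -scalerAr mulr_sumr.
under eq_bigr do rewrite powmean_mulrX //.
by rewrite sumr_const card_ord -scaler_nat scalerA mulVf // scale1r.
Qed.

Lemma powmean_mulM x y : x ^+ d = 1 -> GRing.comm x y ->
  powmean x * powmean (x * y) = powmean x * powmean y.
Proof.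
move=> xd xy; rewrite [powmean (x * y)]/powmean [powmean y]/powmean -!scalerAr.
congr (_ *: _); rewrite /powsum !mulr_sumr; apply: eq_bigr => s _.
by rewrite exprMn_comm // mulrA powmean_mulrX.
Qed.

Lemma mulr_conjX g x y n : g * x = y * g -> g * x ^+ n = y ^+ n * g.
Proof.
move=> gx; elim: n => [|n IHn]; first by rewrite !expr0 mulr1 mul1r.
by rewrite !exprS mulrA gx -mulrA IHn mulrA.
Qed.

Lemma mulr_conjM g x x' y y' :
  g * x = x' * g -> g * y = y' * g -> g * (x * y) = x' * y' * g.
Proof. by move=> gx gy; rewrite mulrA gx -mulrA gy mulrA. Qed.

Lemma mulr_conj_powsum g x y : g * x = y * g -> g * powsum x = powsum y * g.
Proof.
by move=> gx; rewrite /powsum mulr_sumr mulr_suml; apply: eq_bigr => s _; apply: mulr_conjX.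
Qed.

Lemma mulr_conj_1Dscale g x y k : g * x = y * g -> g * (1 + k *: x) = (1 + k *: y) * g.
Proof. by move=> gx; rewrite mulrDr mulrDl mulr1 mul1r -scalerAr -scalerAl gx. Qed.

Lemma mulr_1Dscale x y k :
  (1 + k *: x) * (1 + k *: y) = 1 + k *: y + k *: x + k ^+ 2 *: (x * y).
Proof. by rewrite mulrDl mul1r mulrDr mulr1 -scalerAl -scalerAr scalerA -expr2 !addrA. Qed.

Lemma mulr_1Dscale_absorb x y z w k : y * x = w -> y * z = w -> y * w = w ->
  (1 + k *: y) * (1 + k *: x + k *: z + k ^+ 2 *: w) =
  1 + k *: (x + y + z) + (k ^+ 2 * (k + 3%:R)) *: w.
Proof.
move=> yx yz yw.
have -> : k ^+ 2 * (k + 3%:R) = k ^+ 2 + k * k + k * k + k * k ^+ 2 by ring.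
rewrite mulrDl mul1r -scalerAl !mulrDr !mulr1 -!scalerAr yx yz yw.
rewrite !scalerDr !scalerDl !scalerA -!addrA; congr (_ + (_ + _)).
by rewrite [k ^+ 2 *: w + _]addrCA [k *: z + _]addrCA.
Qed.

Lemma mulr_1D_quadratic g x k : g ^+ 2 = 1 + k *: x + k *: (x * g) ->
  g * (1 + g) = (1 + k *: x) * (1 + g).
Proof.
move=> g2; rewrite mulrDr mulr1 -expr2 g2 mulrDl mul1r mulrDr mulr1 -scalerAl.
by rewrite !addrA [g + 1]addrC.
Qed.

Lemma eij_powmean (t : nat -> A) i j : GRing.comm (t i) (t j) -> t j ^+ d = 1 ->
  eij d t i j = powmean (t i * t j ^+ d.-1).
Proof.
move=> tij tjd; rewrite /eij /powmean /powsum; congr (_ *: _); apply: eq_bigr => s _.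
rewrite exprMn_comm; last exact: commrX.
rewrite -exprM; congr (_ * _).
case: s => [[|s] lt_s_d] /=; first by rewrite subn0 tjd muln0.
have -> : (d.-1 * s.+1 = (d - s.+1) + d * s)%N by rewrite mulnS; lia.
by rewrite exprD exprM tjd expr1n mulr1.
Qed.

Lemma mulr_conj_eij g (t : nat -> A) i j i' j' :
  g * t i = t i' * g -> g * t j = t j' * g -> g * eij d t i j = eij d t i' j' * g.
Proof.
move=> gi gj; rewrite /eij -scalerAl -scalerAr mulr_sumr mulr_suml.
by congr (_ *: _); apply: eq_bigr => s _; apply: mulr_conjM; apply: mulr_conjX.
Qed.

End PowerMeans.

Section ThreeStrands.
Variables (K : fieldType) (A : algType K) (d : nat) (u : K) (g t : nat -> A).

Local Notation g1 := (g 1%N).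
Local Notation g2 := (g 2%N).
Local Notation t1 := (t 1%N).
Local Notation t2 := (t 2%N).
Local Notation t3 := (t 3%N).
Local Notation e12 := (eij d t 1 2).
Local Notation e23 := (eij d t 2 3).
Local Notation e13 := (eij d t 1 3).
Local Notation c := (c12 d g t).
(* [t j ^+ d.-1] stands for the inverse of [t j], which [A] need not provide. *)
Local Notation ratio i j := (t i * t j ^+ d.-1).

Hypothesis d_neq0 : (d%:R : K) != 0.
Hypothesis t_comm :
  forall i j, (1 <= i <= 3)%N -> (1 <= j <= 3)%N -> GRing.comm (t i) (t j).
Hypothesis t_expd : forall i, (1 <= i <= 3)%N -> t i ^+ d = 1.
Hypotheses (g1t1 : g1 * t1 = t2 * g1) (g1t2 : g1 * t2 = t1 * g1) (g1t3 : g1 * t3 = t3 * g1).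
Hypotheses (g2t1 : g2 * t1 = t1 * g2) (g2t2 : g2 * t2 = t3 * g2) (g2t3 : g2 * t3 = t2 * g2).
Hypothesis braid : g2 * g1 * g2 = g1 * g2 * g1.
Hypothesis g1_quadratic : g1 ^+ 2 = 1 + (u - 1) *: e12 + (u - 1) *: (e12 * g1).
Hypothesis g2_quadratic : g2 ^+ 2 = 1 + (u - 1) *: e23 + (u - 1) *: (e23 * g2).

Definition t_powsum : A := powsum d t1 * powsum d t2 * powsum d t3.
Local Notation T := t_powsum.

Lemma d_gt0 : (0 < d)%N.
Proof. by rewrite lt0n; apply: contraNneq d_neq0 => ->. Qed.

Lemma commr_t_ratio i j k : (1 <= i <= 3)%N -> (1 <= j <= 3)%N -> (1 <= k <= 3)%N ->
  GRing.comm (t k) (ratio i j).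
Proof. by move=> *; apply: commrM; [|apply: commrX]; apply: t_comm. Qed.

Lemma ratio_expd i j : (1 <= i <= 3)%N -> (1 <= j <= 3)%N -> ratio i j ^+ d = 1.
Proof.
move=> i3 j3; rewrite exprMn_comm; last by apply/commrX/t_comm.
by rewrite exprAC !t_expd // expr1n mulr1.
Qed.

Lemma e_powmean i j : (1 <= i <= 3)%N -> (1 <= j <= 3)%N ->
  eij d t i j = powmean d (ratio i j).
Proof. by move=> i3 j3; apply: eij_powmean; [apply: t_comm | apply: t_expd]. Qed.

Lemma ratio13 : ratio 1 3 = ratio 1 2 * ratio 2 3.
Proof. by rewrite mulrA -(mulrA t1) -exprSr (prednK d_gt0) t_expd // mulr1. Qed.

Lemma commr_ratio : GRing.comm (ratio 1 2) (ratio 2 3).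
Proof. by apply/commr_sym/commrM; [|apply: commrX]; apply/commr_sym/commr_t_ratio. Qed.

Lemma e13_e12 : e13 * e12 = e12 * e23.
Proof.
rewrite !e_powmean // ratio13 powmeanC ?powmean_mulM ?ratio_expd //.
  exact: commr_ratio.
by apply/commr_sym/commrM; [apply: commr_refl | apply: commr_ratio].
Qed.

Lemma e13_e23 : e13 * e23 = e12 * e23.
Proof.
rewrite !e_powmean // ratio13 [ratio 1 2 * _]commr_ratio.
rewrite powmeanC ?powmean_mulM ?ratio_expd //.
- by rewrite powmeanC //; apply/commr_sym/commr_ratio.
- by apply/commr_sym/commr_ratio.
- by apply/commr_sym/commrM; [apply: commr_refl | apply/commr_sym/commr_ratio].
Qed.

Lemma e23_e12 : e23 * e12 = e12 * e23.
Proof. by rewrite !e_powmean // powmeanC //; apply/commr_sym/commr_ratio. Qed.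

Lemma e23_e13 : e23 * e13 = e12 * e23.
Proof.
rewrite !e_powmean // ratio13 [ratio 1 2 * _]commr_ratio powmean_mulM ?ratio_expd //.
  by rewrite powmeanC //; apply/commr_sym/commr_ratio.
by apply/commr_sym/commr_ratio.
Qed.

Lemma e23_e12e23 : e23 * (e12 * e23) = e12 * e23.
Proof. by rewrite mulrA e23_e12 -mulrA !e_powmean // powmean_idem ?ratio_expd. Qed.

Lemma c12_factor : c = T * g12 g.
Proof.
rewrite /c12.
under eq_bigr => a _ do under eq_bigr => b _ do rewrite -mulr_suml -mulr_sumr.
under eq_bigr => a _ do rewrite -!mulr_suml -mulr_sumr.
by rewrite -!mulr_suml.
Qed.

Lemma commr_powsum_t i j : (1 <= i <= 3)%N -> (1 <= j <= 3)%N ->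
  GRing.comm (powsum d (t i)) (powsum d (t j)).
Proof. by move=> i3 j3; apply/commr_powsum/commr_sym/commr_powsum/t_comm. Qed.

Lemma g1_T : g1 * T = T * g1.
Proof.
have -> : g1 * T = powsum d t2 * powsum d t1 * powsum d t3 * g1.
  by apply: mulr_conjM; [apply: mulr_conjM|]; apply: mulr_conj_powsum.
by rewrite commr_powsum_t.
Qed.

Lemma g2_T : g2 * T = T * g2.
Proof.
have -> : g2 * T = powsum d t1 * powsum d t3 * powsum d t2 * g2.
  by apply: mulr_conjM; [apply: mulr_conjM|]; apply: mulr_conj_powsum.
by rewrite -(mulrA (powsum d t1)) (@commr_powsum_t 3 2) ?mulrA.
Qed.

Lemma commr_T_e i j : (1 <= i <= 3)%N -> (1 <= j <= 3)%N -> GRing.comm T (eij d t i j).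
Proof.
move=> i3 j3; rewrite /t_powsum e_powmean //; apply/commr_sym.
by apply: commrM; [apply: commrM|]; apply/commr_powsum/commr_sym/commr_powmean/commr_t_ratio.
Qed.

Lemma g12_factor1 : g12 g = (1 + g1) * (1 + g2 + g2 * g1).
Proof.
rewrite /g12 mulrDl !mul1r !mulrDr !mulr1 !mulrA -!addrA; congr (_ + _).
by rewrite addrCA; congr (_ + _); rewrite [g1 * g2 + _]addrCA addrCA.
Qed.

Lemma g12_factor2 : g12 g = (1 + g2) * (1 + g1 + g1 * g2).
Proof.
rewrite /g12 mulrDl !mul1r !mulrDr !mulr1 !mulrA braid -!addrA; congr (_ + (_ + _)).
by rewrite addrCA.
Qed.

Lemma commr_T_1De i j k : (1 <= i <= 3)%N -> (1 <= j <= 3)%N ->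
  GRing.comm T (1 + k *: eij d t i j).
Proof. by move=> i3 j3; apply: commrD; [apply: commr1 | apply/commr_scale/commr_T_e]. Qed.

Lemma g1_c12 : g1 * c = (1 + (u - 1) *: e12) * c.
Proof.
rewrite c12_factor g12_factor1.
rewrite mulrA g1_T -mulrA (mulrA g1) (mulr_1D_quadratic g1_quadratic) -(mulrA (1 + _)).
by rewrite mulrA (@commr_T_1De 1 2) // -!mulrA.
Qed.

Lemma g2_c12 : g2 * c = (1 + (u - 1) *: e23) * c.
Proof.
rewrite c12_factor g12_factor2.
rewrite mulrA g2_T -mulrA (mulrA g2) (mulr_1D_quadratic g2_quadratic) -(mulrA (1 + _)).
by rewrite mulrA (@commr_T_1De 2 3) // -!mulrA.
Qed.

Lemma g1_e23 : g1 * e23 = e13 * g1. Proof. exact: mulr_conj_eij. Qed.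
Lemma g1_e13 : g1 * e13 = e23 * g1. Proof. exact: mulr_conj_eij. Qed.
Lemma g2_e12 : g2 * e12 = e13 * g2. Proof. exact: mulr_conj_eij. Qed.

Lemma g1g2_c12 : g1 * g2 * c =
  (1 + (u - 1) *: e12 + (u - 1) *: e13 + (u - 1) ^+ 2 *: (e12 * e23)) * c.
Proof.
rewrite -mulrA g2_c12 mulrA (mulr_conj_1Dscale _ g1_e23) -mulrA g1_c12 mulrA.
by rewrite mulr_1Dscale e13_e12.
Qed.

Lemma g2g1_c12 : g2 * g1 * c =
  (1 + (u - 1) *: e23 + (u - 1) *: e13 + (u - 1) ^+ 2 *: (e12 * e23)) * c.
Proof.
rewrite -mulrA g1_c12 mulrA (mulr_conj_1Dscale _ g2_e12) -mulrA g2_c12 mulrA.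
by rewrite mulr_1Dscale e13_e23.
Qed.

Lemma g1g2g1_c12 : g1 * g2 * g1 * c =
  (1 + (u - 1) *: (e12 + e23 + e13) + ((u - 1) ^+ 2 * (u + 2)) *: (e12 * e23)) * c.
Proof.
rewrite -mulrA g1_c12 mulrA -(mulrA g1) (mulr_conj_1Dscale _ g2_e12) mulrA.
rewrite (mulr_conj_1Dscale _ g1_e13) -2!mulrA (mulrA g1) g1g2_c12 mulrA; congr (_ * _).
have -> : u + 2 = u - 1 + 3%:R by ring.
by rewrite mulr_1Dscale_absorb ?e23_e12 ?e23_e13 ?e23_e12e23.
Qed.

End ThreeStrands.

Theorem lemma6 (R : realType) (d n : nat) (u : CC R)
  (A : algType (CC R)) (g t : nat -> A) :
  (1 <= d)%N -> (3 <= n)%N -> u != 0 ->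
  YH_relations d n u g t ->
  let e := eij d t in
  let c := c12 d g t in
  [/\ g 1%N * c = (1 + (u - 1) *: e 1%N 2%N) * c,
      g 2%N * c = (1 + (u - 1) *: e 2%N 3%N) * c,
      g 1%N * g 2%N * c =
        (1 + (u - 1) *: e 1%N 2%N + (u - 1) *: e 1%N 3%N
           + (u - 1) ^+ 2 *: (e 1%N 2%N * e 2%N 3%N)) * c,
      g 2%N * g 1%N * c =
        (1 + (u - 1) *: e 2%N 3%N + (u - 1) *: e 1%N 3%N
           + (u - 1) ^+ 2 *: (e 1%N 2%N * e 2%N 3%N)) * c &
      g 1%N * g 2%N * g 1%N * c =
        (1 + (u - 1) *: (e 1%N 2%N + e 2%N 3%N + e 1%N 3%N)
           + ((u - 1) ^+ 2 * (u + 2)) *: (e 1%N 2%N * e 2%N 3%N)) * c].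
Proof.
move=> d_gt0 n_ge3 _ [_ [braid [t_comm [t_expd [g_ti [g_tiS [g_tj g_quadratic]]]]]]] e c.
have d_neq0 : (d%:R : CC R) != 0 by rewrite pnatr_eq0 -lt0n.
have t_comm3 i j : (1 <= i <= 3)%N -> (1 <= j <= 3)%N -> GRing.comm (t i) (t j).
  by move=> *; apply: t_comm; lia.
have t_expd3 i : (1 <= i <= 3)%N -> t i ^+ d = 1 by move=> *; apply: t_expd; lia.
have g1t1 : g 1%N * t 1%N = t 2%N * g 1%N by apply: g_ti; lia.
have g1t2 : g 1%N * t 2%N = t 1%N * g 1%N by apply: g_tiS; lia.
have g1t3 : g 1%N * t 3%N = t 3%N * g 1%N by apply: g_tj; lia.
have g2t1 : g 2%N * t 1%N = t 1%N * g 2%N by apply: g_tj; lia.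
have g2t2 : g 2%N * t 2%N = t 3%N * g 2%N by apply: g_ti; lia.
have g2t3 : g 2%N * t 3%N = t 2%N * g 2%N by apply: g_tiS; lia.
have braid12 : g 2%N * g 1%N * g 2%N = g 1%N * g 2%N * g 1%N by apply: braid; lia.
have g1_quadratic := g_quadratic 1%N ltac:(lia).
have g2_quadratic := g_quadratic 2%N ltac:(lia).
by split; [exact: g1_c12 | exact: g2_c12 | exact: g1g2_c12 | exact: g2g1_c12 | exact: g1g2g1_c12].
Qed.
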